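(* Fix $\varepsilon>0$ and a request sequence in which every request has infinite duration. For a VNF $v$, a node $i$ and a latency range $L_j$, let $\Lambda^v_{i,j}$ be the total load of all jobs $(r,v)$ associated with $L_j$ that c-REShare$(\varepsilon)$ handles in node $i$. Then the number of VMs used by c-REShare$(\varepsilon)$ to handle $\Lambda^v_{i,j}$ is at most $\frac{2\Lambda^v_{i,j}}{\lambda_{\min}(1+\varepsilon)^j}+1$.
   Context: Network: a layered graph of nodes (datacenters); a node is at layer $\ell\ge0$ if its distance from the closest leaf is $\ell$. Every node can host arbitrarily many virtual machines (VMs). Each VM $b$ runs exactly one VNF $v$ from a finite set $\mathcal V$, has maximum computing capability $\bar\mu>0$ and allocated capability $\mu_b\le\bar\mu$. Each VNF $v$ has complexity $\theta_v\in(0,1]$. Requests: requests $r$ arrive online; each has a set $\mathcal V_r\subseteq\mathcal V$ of VNFs, arrival time, duration $\tau_r$, traffic load $\lambda_r\ge\lambda_{\min}$ where $\lambda_{\min}=\inf_r\lambda_r>0$ is known in advance, end-to-end delay target $D_r$. For $v\in\mathcal V_r$, $(r,v)$ is a job. For a VM $b$ running $v$, $\Lambda(b)$ is the total load of the jobs on $b$, and each job on $b$ experiences processing latency $1/(\mu_b-\theta_v\Lambda(b))$. Forwarding latency from a leaf to layer $\ell$ is $d_\ell$, strictly increasing in $\ell$. Fair delay allocation: $M_{r,v}=1/(\bar\mu-\theta_v\lambda_r)$; $\ell^*(r)$ is the highest layer $\ell$ with $d_\ell+\sum_{v\in\mathcal V_r}M_{r,v}\le D_r$; $D_r^v=\frac{M_{r,v}}{\sum_{u\in\mathcal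 V_r}M_{r,u}}(D_r-d_{\ell^*(r)})$. Latency ranges: for $\varepsilon>0$, $L_0=[\frac{1}{\bar\mu-\lambda_{\min}},\frac{1}{\bar\mu-\lambda_{\min}(1+\varepsilon)}]$, $L_j=(\frac{1}{\bar\mu-\lambda_{\min}(1+\varepsilon)^j},\frac{1}{\bar\mu-\lambda_{\min}(1+\varepsilon)^{j+1}}]$ for $j\ge1$ (indices with $\lambda_{\min}(1+\varepsilon)^{j+1}<\bar\mu$); job $(r,v)$ is associated with $L_j$ if $D_r^v\in L_j$. Algorithm c-REShare$(\varepsilon)$: on arrival of $r$, compute $\ell^*(r)$ and choose a node $i^*$ at layer $\ell^*(r)$. For each $v\in\mathcal V_r$, with $j$ such that $D_r^v\in L_j$: a VM $b$ in $i^*$ running $v$ and hosting jobs associated with $L_j$ is viable if $\frac{1}{\bar\mu-\theta_v(\Lambda(b)+\lambda_r)}\le D_r^v$ and $\frac{1}{\bar\mu-\theta_v(\Lambda(b)+\lambda_r)}\le D_{r'}^v$ for every job $(r',v)$ already on $b$. If viable VMs exist, $(r,v)$ is placed on the viable VM with the largest $\Lambda(b)$, whose capability is set to $\theta_v\Lambda(b)+1/\min_{(r',v)\in b}D_{r'}^v$ (including the new job); otherwise a new VM running $v$ is opened in $i^*$ with capability $\theta_v\lambda_r+1/D_r^v$ and $(r,v)$ is placed on it. *)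

From Stdlib Require List.
From HB Require Import structures.
From mathcomp Require Import all_boot all_order all_algebra.
Set Implicit Arguments. Unset Strict Implicit. Unset Printing Implicit Defensive.
Import Order.TTheory GRing.Theory Num.Theory.
Local Open Scope ring_scope.

(* A request: its set of VNFs, traffic load lambda_r, delay target D_r.
   Arrival times and durations are irrelevant: all durations are infinite,
   so requests never depart and are processed in arrival order. *)
Record request (V R : Type) := Request { rvnfs : seq V; rlam : R; rD : R }.

(* A VM: hosting node, the VNF it runs, and its jobs as pairs
   (traffic load lambda_r, per-VNF delay budget D_r^v). *)
Record vm (N V R : Type) := VM { vnode : N; vvnf : V; vjobs : seq (R * R) }.

Section CREShare.
Variables (R : realFieldType) (N V : eqType).
Variables (mubar lmin eps : R) (theta : V -> R) (d : nat -> R)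
          (Lmax : nat) (layer : N -> nat).

Local Notation request := (request V R).
Local Notation vm := (vm N V R).

Definition Mrv (r : request) (v : V) : R := (mubar - theta v * rlam r)^-1.
Definition sumM (r : request) : R := \sum_(u <- rvnfs r) Mrv r u.
Definition lstar (r : request) : nat :=
  \max_(l < Lmax.+1 | d l + sumM r <= rD r) (l : nat).
Definition Drv (r : request) (v : V) : R :=
  Mrv r v / sumM r * (rD r - d (lstar r)).

Definition range_lo (j : nat) : R := (mubar - lmin * (1 + eps) ^+ j)^-1.
Definition range_hi (j : nat) : R := (mubar - lmin * (1 + eps) ^+ j.+1)^-1.
Definition range_ok (j : nat) : bool := lmin * (1 + eps) ^+ j.+1 < mubar.
Definition inL (j : nat) (x : R) : bool :=
  [&& range_ok j, (if j == 0%N then range_lo j <= x else range_lo j < x)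
    & x <= range_hi j].

Definition load (b : vm) : R := \sum_(p <- vjobs b) p.1.
Definition latency (b : vm) (v : V) (lam : R) : R :=
  (mubar - theta v * (load b + lam))^-1.

Definition viable (i : N) (v : V) (lam D : R) (b : vm) : Prop :=
  [/\ vnode b = i, vvnf b = v,
      vjobs b <> [::]
    & exists j, inL j D /\ all (fun p => inL j p.2) (vjobs b)] /\
  [/\ 0 < mubar - theta v * (load b + lam),
      latency b v lam <= D
    & all (fun p => latency b v lam <= p.2) (vjobs b)].

Definition add_job (b : vm) (lam D : R) : vm :=
  VM (vnode b) (vvnf b) (rcons (vjobs b) (lam, D)).
Definition open_vm (i : N) (v : V) (lam D : R) : vm := VM i v [:: (lam, D)].

Definition place (s s' : seq vm) (i : N) (v : V) (lam D : R) : Prop :=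
  (exists s1 b s2,
      [/\ s = s1 ++ b :: s2, viable i v lam D b,
          (forall b', Stdlib.Lists.List.In b' (s1 ++ s2) -> viable i v lam D b' ->
                      load b' <= load b)
        & s' = s1 ++ add_job b lam D :: s2])
  \/ ((forall b, Stdlib.Lists.List.In b s -> ~ viable i v lam D b)
      /\ s' = rcons s (open_vm i v lam D)).

Inductive place_all : seq vm -> seq vm -> N -> request -> seq V -> Prop :=
| place_all_nil s i r : place_all s s i r [::]
| place_all_cons s s1 s2 i r v vs :
    place s s1 i v (rlam r) (Drv r v) -> place_all s1 s2 i r vs ->
    place_all s s2 i r (v :: vs).

(* run rs s : after processing the request sequence rs (in order),
   c-REShare(eps) may be in VM configuration s (node choice i* at layer
   l*(r) and tie-breaking are arbitrary). *)
Inductive run : seq request -> seq vm -> Prop :=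
| run_nil : run [::] [::]
| run_snoc rs s s' r i :
    run rs s -> layer i = lstar r -> place_all s s' i r (rvnfs r) ->
    run (rcons rs r) s'.

Definition admissible (r : request) : bool :=
  [&& uniq (rvnfs r), lmin <= rlam r,
      all (fun v => theta v * rlam r < mubar) (rvnfs r)
    & d 0 + sumM r <= rD r].

Definition handled_load (s : seq vm) (i : N) (v : V) (j : nat) : R :=
  \sum_(b <- s | (vnode b == i) && (vvnf b == v))
     \sum_(p <- vjobs b | inL j p.2) p.1.

Definition used_vms (s : seq vm) (i : N) (v : V) (j : nat) : nat :=
  count (fun b => [&& vnode b == i, vvnf b == v & has (fun p => inL j p.2) (vjobs b)]) s.

End CREShare.

From mathcomp Require Import all_boot all_order all_algebra.
From mathcomp Require Import lra.
Set Implicit Arguments. Unset Strict Implicit. Unset Printing Implicit Defensive.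
Import Order.TTheory GRing.Theory Num.Theory.
Local Open Scope ring_scope.

(* Fix i, v, j and put X := lmin (1 + eps)^j, so that range_lo j = 1/(mubar - X).
   A job is only added to a VM whose jobs lie in its own latency range, so
   every VM hosts jobs of a single range.  When a VM is opened in node i for a
   job (r, v) of range L_j, no VM b of node i running v with jobs in L_j was
   viable: its latency after accepting the job is undefined or exceeds some
   budget in L_j, hence exceeds range_lo j, which forces
   theta_v (load b + lambda_r) > X and so load b + lambda_r > X.  Adding jobs
   only increases loads, so the loads of any two such VMs always sum to more
   than X, and n nonnegative numbers with this property sum to at least
   (n - 1) X / 2. *)

Lemma allP_In (T : Type) (P : pred T) (s : seq T) :
  reflect (forall x, List.In x s -> P x) (all P s).
Proof.
elim: s => [|x s IH] /=; first by left.
apply: (iffP andP) => [[Px /IH Ps] y [<- // | /Ps //]|Hs].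
by split; [apply: Hs; left | apply/IH => y Hy; apply: Hs; right].
Qed.

Lemma eq_filter_all (T : Type) (a P1 P2 : pred T) (s : seq T) :
  (forall x, a x -> P1 x = P2 x) -> all a s -> filter P1 s = filter P2 s.
Proof.
move=> eqP12; elim: s => //= x s IH /andP [ax /IH ->].
by rewrite eqP12.
Qed.

Section PairwiseLargeSums.
Variables (R : realFieldType) (X : R).

Local Notation sum_gt := (fun x y => X < x + y).

Lemma pairwise_sum_gt_ler (l1 l2 : seq R) (x y : R) :
  x <= y -> pairwise sum_gt (l1 ++ x :: l2) -> pairwise sum_gt (l1 ++ y :: l2).
Proof.
move=> le_xy; rewrite !pairwise_cat !allrel_consr !pairwise_cons.
case/and3P => /andP [all_l1 -> ->] /andP [all_l2 ->].
by rewrite !(sub_all _ all_l1, sub_all _ all_l2) // => a /=; lra.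
Qed.

Lemma size_mul_le_sum_pairwise_gt (a : R) (l : seq R) :
  0 <= a -> all (fun x => 0 <= x) l -> all (sum_gt a) l -> pairwise sum_gt l ->
  (size l)%:R * X <= a + 2 * \sum_(x <- l) x.
Proof.
elim: l a => [|b l IH] a a_ge0 /=; first by rewrite big_nil mul0r; lra.
case/andP => b_ge0 l_ge0 /andP [ltXab _] /andP [ltXb pw_l].
have := IH b b_ge0 l_ge0 ltXb pw_l.
by rewrite big_cons -addn1 natrD mulrDl mul1r; lra.
Qed.

Lemma size_le_sum_pairwise_gt (t : seq R) :
  0 < X -> all (fun x => 0 <= x) t -> pairwise sum_gt t ->
  (size t)%:R <= 2 * (\sum_(x <- t) x) / X + 1.
Proof.
move=> X_gt0; case: t => [|a l]; first by rewrite big_nil mulr0 mul0r /=; lra.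
rewrite [all _ _]/= pairwise_cons => /andP [a_ge0 l_ge0] /andP [ltXa pw_l].
have := size_mul_le_sum_pairwise_gt a_ge0 l_ge0 ltXa pw_l.
have : 0 <= \sum_(x <- l) x by rewrite big_seq sumr_ge0 // => x /(allP l_ge0).
rewrite big_cons -[size (a :: l)]/(size l).+1 -(natr1 (size l)).
by rewrite lerD2r ler_pdivlMr //; lra.
Qed.

End PairwiseLargeSums.

Section LatencyRanges.
Variables (R : realFieldType) (mubar lmin eps : R).
Hypotheses (eps_gt0 : 0 < eps) (lmin_gt0 : 0 < lmin).

Local Notation range_ok := (range_ok mubar lmin eps).
Local Notation range_lo := (range_lo mubar lmin eps).
Local Notation inL := (inL mubar lmin eps).

Definition range_load (j : nat) : R := lmin * (1 + eps) ^+ j.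

Lemma range_load_gt0 j : 0 < range_load j.
Proof. by rewrite /range_load mulr_gt0 // exprn_gt0 // addr_gt0. Qed.

Lemma range_load_le m n : (m <= n)%N -> range_load m <= range_load n.
Proof. by move=> le_mn; rewrite /range_load ler_pM2l // ler_eXn2l // ltrDl. Qed.

Lemma range_ok_load_lt j : range_ok j -> range_load j < mubar.
Proof. by apply: le_lt_trans; apply: range_load_le. Qed.

Lemma range_okW m n : (m <= n)%N -> range_ok n -> range_ok m.
Proof. by move=> le_mn; apply: le_lt_trans; apply: range_load_le. Qed.

Lemma range_lo_le m n : (m <= n)%N -> range_ok n -> range_lo m <= range_lo n.
Proof.
move=> le_mn ok_n; have ok_m := range_okW le_mn ok_n.
have := range_ok_load_lt ok_m; have := range_ok_load_lt ok_n.
have := range_load_le le_mn; rewrite /range_load => le_load lt_n lt_m.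
by rewrite lef_pV2 ?posrE; lra.
Qed.

Lemma inL_range_lo j x : inL j x -> range_lo j <= x.
Proof. by case/and3P => _ + _; case: (j == 0%N) => // /ltW. Qed.

Lemma inL_inj j k x : inL j x -> inL k x -> j = k.
Proof.
wlog lt_jk : j k / (j < k)%N => [hwlog inj ink|].
  by case: (ltngtP j k) => [/hwlog->|/hwlog->|].
move=> /and3P [_ _ le_x_hi] /and3P [ok_k + _].
case: k lt_jk ok_k => // k lt_jk ok_k /= lt_lo_x.
have le_x_lo : x <= range_lo j.+1 := le_x_hi.
have le_lo := range_lo_le lt_jk ok_k; exfalso; lra.
Qed.

Lemma all_inL_eq (l : seq (R * R)) j k : l != [::] ->
  all (fun p => inL j p.2) l -> all (fun p => inL k p.2) l = (k == j).
Proof.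
case: l => [|p l] //= _ /andP [inj_p all_j].
apply/andP/eqP => [[ink_p _]|->//]; exact: inL_inj ink_p inj_p.
Qed.

Lemma range_load_lt_of_latency_gt j (t y : R) : range_ok j ->
  0 < t <= 1 -> 0 <= y ->
  (0 < mubar - t * y -> range_lo j < (mubar - t * y)^-1) -> range_load j < y.
Proof.
move=> ok_j /andP [t_gt0 t_le1] y_ge0 lt_lo.
have ty_le_y : t * y <= y by rewrite ler_piMl.
have lt_mubar := range_ok_load_lt ok_j.
suff : range_load j < t * y by lra.
case: (ltP 0 (mubar - t * y)) => [den_gt0|]; last by lra.
move: (lt_lo den_gt0); rewrite /range_lo -/(range_load j) ltf_pV2 ?posrE; lra.
Qed.

End LatencyRanges.

Section CREShareInvariant.
Variables (R : realFieldType) (N V : eqType) (mubar lmin eps : R) (theta : V -> R).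
Hypotheses (eps_gt0 : 0 < eps) (lmin_gt0 : 0 < lmin).
Hypothesis theta_range : forall u, 0 < theta u <= 1.
Variables (i : N) (v : V) (j : nat).
Hypothesis ok_j : range_ok mubar lmin eps j.

Local Notation vm := (vm N V R).
Local Notation inL := (inL mubar lmin eps).
Local Notation X := (range_load lmin eps j).

Definition in_range (k : nat) (b : vm) : bool := all (fun p => inL k p.2) (vjobs b).
Definition meets_range (k : nat) (b : vm) : bool := has (fun p => inL k p.2) (vjobs b).

Definition range_vm (b : vm) : bool :=
  [&& vnode b == i, vvnf b == v, vjobs b != [::] & in_range j b].
Definition pure_vm (b : vm) : bool :=
  (vjobs b != [::]) && (meets_range j b ==> in_range j b).
Definition nonneg_vm (b : vm) : bool := all (fun p => 0 <= p.1) (vjobs b).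

Definition reshare_inv (s : seq vm) : Prop :=
  [/\ all pure_vm s, all nonneg_vm s
    & pairwise (fun x y => X < x + y) (map (@load R N V) (filter range_vm s))].

Lemma load_add_job (b : vm) (lam D : R) : load (add_job b lam D) = load b + lam.
Proof. by rewrite /load /= big_rcons. Qed.

Lemma load_open_vm (i' : N) (v' : V) (lam D : R) : load (open_vm i' v' lam D) = lam.
Proof. by rewrite /load big_seq1. Qed.

Lemma load_ge0 (b : vm) : nonneg_vm b -> 0 <= load b.
Proof. by move=> nn_b; rewrite /load big_seq sumr_ge0 // => p /(allP nn_b). Qed.

Lemma meets_in_range k (b : vm) : vjobs b != [::] -> in_range k b -> meets_range k b.
Proof. by rewrite /meets_range /in_range; case: (vjobs b) => [|p l] //= _ /andP [->]. Qed.

Lemma pure_vm_used (b : vm) : pure_vm b ->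
  [&& vnode b == i, vvnf b == v & meets_range j b] = range_vm b.
Proof.
case/andP => ne_b pure_b; rewrite /range_vm ne_b.
case: (_ == i) (_ == v) => [] [] //=.
by apply/idP/idP; [apply: (implyP pure_b) | apply: meets_in_range].
Qed.

Lemma in_range_meets_eq k l (b : vm) : in_range k b -> meets_range l b -> l = k.
Proof.
move=> /allP range_b /hasP [p /range_b ink_p inl_p].
exact: (inL_inj eps_gt0 lmin_gt0 inl_p ink_p).
Qed.

Section AddJob.
Variables (b : vm) (k : nat) (lam D : R).
Hypotheses (ne_b : vjobs b != [::]) (range_b : in_range k b) (range_D : inL k D).

Let ne_add : vjobs (add_job b lam D) != [::].
Proof. by rewrite /= -size_eq0 size_rcons. Qed.

Let range_add : in_range k (add_job b lam D).
Proof. by rewrite /in_range /= all_rcons range_D. Qed.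

Lemma range_vm_add_job : range_vm (add_job b lam D) = range_vm b.
Proof.
rewrite /range_vm /in_range (all_inL_eq eps_gt0 lmin_gt0 j ne_b range_b).
by rewrite (all_inL_eq eps_gt0 lmin_gt0 j ne_add range_add) ne_b ne_add.
Qed.

Lemma pure_vm_add_job : pure_vm (add_job b lam D).
Proof. by rewrite /pure_vm ne_add; apply/implyP => /(in_range_meets_eq range_add) ->. Qed.

End AddJob.

Lemma pure_vm_open_vm (i' : N) (v' : V) (lam D : R) : pure_vm (open_vm i' v' lam D).
Proof. by rewrite /pure_vm /meets_range /in_range /= orbF andbT implybb. Qed.

Lemma range_load_lt_of_not_viable (b : vm) lam D :
  range_vm b -> nonneg_vm b -> 0 <= lam -> inL j D ->
  ~ viable mubar lmin eps theta i v lam D b -> X < load b + lam.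
Proof.
case/and4P => /eqP node_b /eqP vnf_b ne_b range_b nn_b lam_ge0 range_D not_viable.
apply: (range_load_lt_of_latency_gt eps_gt0 lmin_gt0 ok_j (theta_range v)).
  by have := load_ge0 nn_b; lra.
move=> den_gt0; rewrite ltNge; apply/negP => lat_le_lo.
apply: not_viable; split; split => //; first by apply/eqP.
- by exists j; split.
- by apply: le_trans lat_le_lo _; apply: inL_range_lo.
- apply/allP => p /(allP range_b) /inL_range_lo.
  by apply: le_trans lat_le_lo.
Qed.

Lemma place_inv s s' i' v' (lam D : R) : 0 <= lam -> reshare_inv s ->
  place mubar lmin eps theta s s' i' v' lam D -> reshare_inv s'.
Proof.
move=> lam_ge0 [pure_s nn_s pw_s].
case=> [[s1 [b [s2 [s_eq [[_ _ ne_b [k [range_D range_b]]] _] _ ->]]]]|[not_viable ->]].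
  have {}ne_b : vjobs b != [::] by apply/eqP.
  move: pure_s nn_s pw_s; rewrite /reshare_inv s_eq !all_cat !filter_cat /=.
  rewrite (range_vm_add_job _ ne_b range_b range_D) (pure_vm_add_job _ range_b range_D)
    /nonneg_vm all_rcons lam_ge0.
  case/and3P => -> _ -> /and3P [-> -> ->].
  case: (range_vm b) => //=; rewrite !map_cat /= load_add_job => pw_s.
  by split => //; apply: pairwise_sum_gt_ler pw_s; rewrite lerDl.
split; first by rewrite all_rcons pure_vm_open_vm pure_s.
  by rewrite all_rcons nn_s /nonneg_vm /= lam_ge0.
rewrite filter_rcons; case: ifP => // /and4P [/eqP node_i /eqP vnf_v _ range_D].
rewrite /= in node_i vnf_v range_D; subst i' v'.
rewrite map_rcons pairwise_rcons pw_s andbT load_open_vm all_map all_filter.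
apply/allP_In => b b_in; apply/implyP => range_b /=.
apply: range_load_lt_of_not_viable (not_viable b b_in) => //.
- by move/allP_In: nn_s; apply.
- by rewrite /in_range /= andbT in range_D.
Qed.

Lemma place_all_inv d Lmax s s' i' r vs : 0 <= rlam r -> reshare_inv s ->
  place_all mubar lmin eps theta d Lmax s s' i' r vs -> reshare_inv s'.
Proof.
move=> + + place_s; elim: place_s => // {}s s1 s2 {}i' {}r u {}vs place_u _ IH lam_ge0.
by move=> inv_s; apply: IH (place_inv lam_ge0 inv_s place_u).
Qed.

Lemma run_inv d Lmax layer rs s : all (admissible mubar lmin theta d) rs ->
  run mubar lmin eps theta d Lmax layer rs s -> reshare_inv s.
Proof.
move=> + run_s; elim: run_s => [|rs' {}s s' r i' _ IH _ place_r]; first by split.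
rewrite all_rcons => /andP [/and4P [_ le_lmin_r _ _] /IH inv_s].
apply: place_all_inv inv_s place_r.
by apply: le_trans le_lmin_r; apply: ltW.
Qed.

Lemma used_vms_eq s : all pure_vm s ->
  used_vms mubar lmin eps s i v j = size (filter range_vm s).
Proof.
move=> pure_s; rewrite /used_vms -size_filter; congr size.
by apply: eq_filter_all pure_s => b /pure_vm_used.
Qed.

Lemma handled_load_eq s : all pure_vm s ->
  handled_load mubar lmin eps s i v j =
    \sum_(x <- map (@load R N V) (filter range_vm s)) x.
Proof.
move=> pure_s; rewrite /handled_load (bigID (meets_range j)) /=.
rewrite [X in _ + X]big1 ?addr0; last by move=> b /andP [_]; apply: big_hasC.
rewrite -big_filter (@eq_filter_all _ _ _ range_vm _ _ pure_s); last first.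
  by move=> b /pure_vm_used <-; rewrite andbA.
rewrite big_map !big_filter; apply: eq_bigr => b /and4P [_ _ _ range_b].
by rewrite /load -big_filter (all_filterP range_b).
Qed.

End CREShareInvariant.

Theorem lemma4 (R : realFieldType) (N V : eqType)
  (mubar lmin eps : R) (theta : V -> R) (d : nat -> R)
  (Lmax : nat) (layer : N -> nat)
  (rs : seq (request V R)) (s : seq (vm N V R)) (i : N) (v : V) (j : nat) :
  0 < eps -> 0 < mubar -> 0 < lmin ->
  (forall u, 0 < theta u <= 1) ->
  (forall l, d l < d l.+1) ->
  (forall n, (layer n <= Lmax)%N) ->
  all (admissible mubar lmin theta d) rs ->
  range_ok mubar lmin eps j ->
  run mubar lmin eps theta d Lmax layer rs s ->
  (used_vms mubar lmin eps s i v j)%:R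
    <= 2 * handled_load mubar lmin eps s i v j / (lmin * (1 + eps) ^+ j) + 1.
Proof.
(* Any node of layer l*(r) may be chosen. *)
move=> eps_gt0 _ lmin_gt0 theta_range _ _ adm_rs ok_j run_s.
have [pure_s nn_s pw_s] := run_inv eps_gt0 lmin_gt0 theta_range i v ok_j adm_rs run_s.
rewrite used_vms_eq // handled_load_eq // -(size_map (@load R N V)).
apply: size_le_sum_pairwise_gt pw_s; first exact: range_load_gt0.
rewrite all_map all_filter; apply: sub_all nn_s => b nn_b; apply/implyP => _.
exact: load_ge0.
Qed.
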